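(* Let $\mathfrak M$ be a relational structure with domain $\Sigma$. For every $n\ge1$ and every relation $R\subseteq(\Sigma^* )^n$, $R$ is $MSO(\mathfrak M)$-definable if and only if $R$ is $\mathfrak M$-recognizable.
   Context: Let $\mathfrak L$ be a relational language and $\mathfrak M$ an $\mathfrak L$-structure with domain $\Sigma$ (finite or infinite). Let $\#\notin\Sigma$ and let $\mathfrak M_\#$ be the structure in the language $\mathfrak L_\#=\mathfrak L\cup\{P_\#\}$ with domain $\Sigma\cup\{\#\}$, every symbol of $\mathfrak L$ interpreted as in $\mathfrak M$ and $P_\#(x)$ holding iff $x=\#$. For $w=(w_1,\dots,w_n)\in(\Sigma^* )^n$, $\langle w\rangle$ denotes the word over $(\Sigma\cup\{\#\})^n$ of length $\max_i|w_i|$ obtained by padding each $w_i$ on the right with $\#$'s and reading them in parallel; $\pi_j(\langle w\rangle)$ is its $j$-th component and $u[i]$ the $i$-th letter of a word $u$ (starting at $0$). $\mathfrak M$-automata: an $\mathfrak M$-automaton with $n$ tapes is $(Q,n,E,I,T)$ with $Q$ a finite set of states, $I,T\subseteq Q$, and $E\subseteq Q\times\mathcal F_n\times Q$ a finite set of transitions, $\mathcal F_n$ the set of first-order $\mathfrak L_\#$-formulas with $n$ free variables; $w$ is accepted if there are states $q_0\in I,\dots,q_m\in T$ ($m=|\langle w\rangle|$) such that for each $i<m$ some $(q_i,\varphi,q_{i+1})\in E$ satisfies $\mathfrak M_\#\models\varphi(\pi_1(\langle w\rangle)[i],\dots,\pi_n(\langle w\rangle)[i])$. $R$ is $\mathfrak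 M$-recognizable if it is the set of tuples accepted by some $\mathfrak M$-automaton. $MSO(\mathfrak M)$-definability: to each first-order $\mathfrak L_\#$-formula $F$ with at least one free variable associate a unary predicate symbol $\alpha_F$; $MSO(\mathfrak L)$ is monadic second-order logic over the signature $\{<\}\cup\{\alpha_F\}$. $R\subseteq(\Sigma^* )^n$ is $MSO(\mathfrak M)$-definable if there is an $MSO(\mathfrak L)$-sentence $\psi$ such that $w\in R$ iff $\psi$ holds in the structure with domain $D=\{0,\dots,|\langle w\rangle|-1\}$, $<$ the natural order on $D$, and, for each $F$ with $n$ free variables, $\alpha_F(x)$ true iff $\mathfrak M_\#\models F(\pi_1(\langle w\rangle)[x],\dots,\pi_n(\langle w\rangle)[x])$. *)

From Stdlib Require Import List Arith.
Import ListNotations.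
Set Implicit Arguments.

Record rel_lang := { Sym : Type; arity : Sym -> nat }.

(* An L-structure M with domain Sigma = dom M.  interp s is only consulted
   on lists of length arity s. *)
Record structure (L : rel_lang) := { dom : Type; interp : Sym L -> list dom -> Prop }.

(* First-order formulas of L_# = L ∪ {P_#} (with equality); variables are nats. *)
Inductive fo (L : rel_lang) : Type :=
| FRel : Sym L -> list nat -> fo L
| FHash : nat -> fo L
| FEq : nat -> nat -> fo L
| FNot : fo L -> fo L
| FAnd : fo L -> fo L -> fo L
| FEx : nat -> fo L -> fo L.

Definition upd {A : Type} (e : nat -> A) (x : nat) (a : A) : nat -> A :=
  fun y => if Nat.eqb y x then a else e y.

(* Satisfaction in M_# : domain option (dom M), None playing the role of #. *)
Fixpoint fo_sat L (M : structure L) (env : nat -> option (dom M)) (F : fo L) : Prop :=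
  match F with
  | FRel _ s args => length args = arity L s /\
      exists l, map env args = map Some l /\ interp M s l
  | FHash _ x => env x = None
  | FEq _ x y => env x = env y
  | FNot f => ~ fo_sat M env f
  | FAnd f g => fo_sat M env f /\ fo_sat M env g
  | FEx x f => exists a, fo_sat M (upd env x a) f
  end.

Fixpoint fo_free L (F : fo L) (x : nat) : Prop :=
  match F with
  | FRel _ _ args => In x args
  | FHash _ y => x = y
  | FEq _ y z => x = y \/ x = z
  | FNot f => fo_free f x
  | FAnd f g => fo_free f x \/ fo_free g x
  | FEx y f => x <> y /\ fo_free f x
  end.

Definition fo_formula_n L (n : nat) (F : fo L) : Prop :=
  forall x, fo_free F x -> x < n.

(* Tuples of words w = (w_1..w_n) are lists of length n of words. *)
Definition conv_len {S : Type} (w : list (list S)) : nat :=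
  fold_right max 0 (map (@length S) w).

(* The letter <w>[i] : the i-th letter of each padded component
   (None = #). *)
Definition conv_letter {S : Type} (w : list (list S)) (i : nat) : list (option S) :=
  map (fun u => nth_error u i) w.

(* Assignment x_j := pi_{j+1}(<w>)[i]. *)
Definition conv_env {S : Type} (w : list (list S)) (i : nat) : nat -> option S :=
  fun k => nth k (conv_letter w i) None.

Record automaton (L : rel_lang) (n : nat) := {
  state : Type;
  state_finite : exists l : list state, forall q, In q l;
  initial : state -> Prop;
  final : state -> Prop;
  trans : list (state * fo L * state);
  trans_ok : forall q F q', In (q, F, q') trans -> fo_formula_n n F }.

Definition accepts L (M : structure L) n (A : automaton L n) (w : list (list (dom M))) : Prop :=
  exists run : nat -> state A,
    initial A (run 0) /\ final A (run (conv_len w)) /\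
    forall i, i < conv_len w ->
      exists F, In (run i, F, run (S i)) (trans A) /\ fo_sat M (conv_env w i) F.

Definition recognizable L (M : structure L) (n : nat) (R : list (list (dom M)) -> Prop) : Prop :=
  exists A : automaton L n, forall w, length w = n -> (R w <-> accepts M A w).

Inductive mso (L : rel_lang) : Type :=
| MLt : nat -> nat -> mso L
| MEq : nat -> nat -> mso L
| MIn : nat -> nat -> mso L
| MAlpha : fo L -> nat -> mso L
| MNot : mso L -> mso L
| MAnd : mso L -> mso L -> mso L
| MEx1 : nat -> mso L -> mso L
| MEx2 : nat -> mso L -> mso L.

Fixpoint mso_sat L (M : structure L) (w : list (list (dom M)))
    (e1 : nat -> nat) (e2 : nat -> nat -> Prop) (phi : mso L) : Prop :=
  match phi with
  | MLt _ x y => e1 x < e1 y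
  | MEq _ x y => e1 x = e1 y
  | MIn _ x X => e2 X (e1 x)
  | MAlpha F x => fo_sat M (conv_env w (e1 x)) F
  | MNot f => ~ mso_sat M w e1 e2 f
  | MAnd f g => mso_sat M w e1 e2 f /\ mso_sat M w e1 e2 g
  | MEx1 x f => exists p, p < conv_len w /\ mso_sat M w (upd e1 x p) e2 f
  | MEx2 X f => exists P : nat -> Prop, (forall p, P p -> p < conv_len w) /\
                  mso_sat M w e1 (upd e2 X P) f
  end.

Fixpoint mso_free1 L (phi : mso L) (x : nat) : Prop :=
  match phi with
  | MLt _ y z => x = y \/ x = z
  | MEq _ y z => x = y \/ x = z
  | MIn _ y _ => x = y
  | MAlpha _ y => x = y
  | MNot f => mso_free1 f x
  | MAnd f g => mso_free1 f x \/ mso_free1 g x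
  | MEx1 y f => x <> y /\ mso_free1 f x
  | MEx2 _ f => mso_free1 f x
  end.

Fixpoint mso_free2 L (phi : mso L) (X : nat) : Prop :=
  match phi with
  | MIn _ _ Y => X = Y
  | MLt _ _ _ | MEq _ _ _ | MAlpha _ _ => False
  | MNot f => mso_free2 f X
  | MAnd f g => mso_free2 f X \/ mso_free2 g X
  | MEx1 _ f => mso_free2 f X
  | MEx2 Y f => X <> Y /\ mso_free2 f X
  end.

Definition mso_sentence L (phi : mso L) : Prop :=
  (forall x, ~ mso_free1 phi x) /\ (forall X, ~ mso_free2 phi X).

Fixpoint mso_alpha_ok L (n : nat) (phi : mso L) : Prop :=
  match phi with
  | MAlpha F _ => fo_formula_n n F
  | MLt _ _ _ | MEq _ _ _ | MIn _ _ _ => True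
  | MNot f | MEx1 _ f | MEx2 _ f => mso_alpha_ok n f
  | MAnd f g => mso_alpha_ok n f /\ mso_alpha_ok n g
  end.

Definition mso_definable L (M : structure L) (n : nat) (R : list (list (dom M)) -> Prop) : Prop :=
  exists psi : mso L, mso_sentence psi /\ mso_alpha_ok n psi /\
    forall w, length w = n ->
      (R w <-> mso_sat M w (fun _ => 0) (fun _ _ => False) psi).

(* Recognizability implies definability by Buchi's construction: one set variable per
   state guesses an accepting run, each position carrying the state reached after reading
   it, and first-order conditions check that the run starts in an initial state, ends in a
   final one and follows transitions whose labels F hold at the letters (atoms alpha_F).

   Conversely, interpret formulas over words whose letters also carry marks for the free
   variables. By induction on the formula, its language has finitely many residuals (left
   quotients), and the residual by a letter depends only on finitely many properties of the
   letter: some marks and some formulas alpha_F. Negation and conjunction preserve this, set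
   quantification is a projection handled by the subset construction, and first-order
   quantification is set quantification over singletons. For a sentence, the residuals are
   the states of an M-automaton whose transitions are labelled by the complete conjunctions
   of these formulas. *)

From Stdlib Require Import List Arith Lia Classical ClassicalEpsilon FunctionalExtensionality.
Import ListNotations.
Set Implicit Arguments.

Section Connectives.
Variable L : rel_lang.

Definition MOr (f g : mso L) := MNot (MAnd (MNot f) (MNot g)).
Definition MImp (f g : mso L) := MNot (MAnd f (MNot g)).
Definition MAll1 x (f : mso L) := MNot (MEx1 x (MNot f)).
Definition MTrue : mso L := MNot (MEx1 0 (MNot (MEq L 0 0))).
Definition MFalse : mso L := MNot MTrue.
Definition MProp (Q : Prop) : mso L :=
  if excluded_middle_informative Q then MTrue else MFalse.
Definition MBigOr (fs : list (mso L)) := fold_right MOr MFalse fs.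
Definition MBigAnd (fs : list (mso L)) := fold_right (@MAnd L) MTrue fs.
Fixpoint MEx2s (k : nat) (f : mso L) : mso L :=
  match k with 0 => f | S k => MEx2 k (MEx2s k f) end.

Section Semantics.
Variables (M : structure L) (w : list (list (dom M))).

Lemma sat_MOr e1 e2 f g :
  mso_sat M w e1 e2 (MOr f g) <-> mso_sat M w e1 e2 f \/ mso_sat M w e1 e2 g.
Proof. simpl; tauto. Qed.

Lemma sat_MImp e1 e2 f g :
  mso_sat M w e1 e2 (MImp f g) <-> (mso_sat M w e1 e2 f -> mso_sat M w e1 e2 g).
Proof. simpl; tauto. Qed.

Lemma sat_MAll1 e1 e2 x f : mso_sat M w e1 e2 (MAll1 x f) <->
  forall p, p < conv_len w -> mso_sat M w (upd e1 x p) e2 f.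
Proof.
  simpl; split.
  - intros H p Hp; apply NNPP; eauto.
  - intros H [p [Hp Hf]]; eauto.
Qed.

Lemma sat_MTrue e1 e2 : mso_sat M w e1 e2 MTrue.
Proof. simpl; intros [p [_ Hp]]; auto. Qed.

Lemma sat_MProp e1 e2 Q : mso_sat M w e1 e2 (MProp Q) <-> Q.
Proof.
  unfold MProp; destruct (excluded_middle_informative Q) as [HQ|HQ].
  - split; auto using sat_MTrue.
  - split; [intro H; destruct H; apply sat_MTrue|tauto].
Qed.

Lemma sat_MBigOr_map {T} e1 e2 (g : T -> mso L) l :
  mso_sat M w e1 e2 (MBigOr (map g l)) <-> exists a, In a l /\ mso_sat M w e1 e2 (g a).
Proof.
  induction l as [|a l IH]; simpl MBigOr.
  - split; [intro H; destruct H; apply sat_MTrue|intros [? [[] _]]].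
  - rewrite sat_MOr, IH; simpl; split.
    + intros [H|[b [Hb H]]]; eauto.
    + intros [b [[<-|Hb] H]]; eauto.
Qed.

Lemma sat_MBigAnd_map {T} e1 e2 (g : T -> mso L) l :
  mso_sat M w e1 e2 (MBigAnd (map g l)) <-> forall a, In a l -> mso_sat M w e1 e2 (g a).
Proof.
  induction l as [|a l IH]; simpl MBigAnd.
  - split; [intros _ ? []|intros; apply sat_MTrue].
  - change (mso_sat M w e1 e2 (g a) /\ mso_sat M w e1 e2 (MBigAnd (map g l)) <->
      forall b, In b (a :: l) -> mso_sat M w e1 e2 (g b)).
    rewrite IH; simpl; split.
    + intros [Ha H] b [<-|Hb]; auto.
    + auto.
Qed.

Lemma sat_MEx2s k : forall e1 e2 f, mso_sat M w e1 e2 (MEx2s k f) <->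
  exists Q : nat -> nat -> Prop, (forall X p, X < k -> Q X p -> p < conv_len w) /\
    mso_sat M w e1 (fun X => if X <? k then Q X else e2 X) f.
Proof.
  induction k as [|k IH]; intros e1 e2 f; simpl MEx2s.
  - split; [|intros [Q [_ H]]; exact H].
    intro H; exists (fun _ _ => False); split; [lia|exact H].
  - change (mso_sat M w e1 e2 (MEx2 k (MEx2s k f))) with (exists P : nat -> Prop,
      (forall p, P p -> p < conv_len w) /\ mso_sat M w e1 (upd e2 k P) (MEx2s k f)).
    split.
    + intros [P [HP H]]; apply IH in H as [Q [HQ H]].
      exists (fun X => if X <? k then Q X else P); split.
      * intros X p HX; destruct (Nat.ltb_spec X k); eauto.
      * replace (fun X => if X <? S k then if X <? k then Q X else P else e2 X)
          with (fun X => if X <? k then Q X else upd e2 k P X); [exact H|].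
        apply functional_extensionality; intro X; unfold upd.
        destruct (Nat.ltb_spec X k), (Nat.ltb_spec X (S k)), (Nat.eqb_spec X k); auto; lia.
    + intros [Q [HQ H]]; exists (Q k); split; [intros p; apply HQ; lia|].
      rewrite IH; exists Q; split; [intros X p HX HXp; apply (HQ X); [lia|exact HXp]|].
      replace (fun X => if X <? k then Q X else upd e2 k (Q k) X)
        with (fun X => if X <? S k then Q X else e2 X); [exact H|].
      apply functional_extensionality; intro X; unfold upd.
      destruct (Nat.ltb_spec X k), (Nat.ltb_spec X (S k)), (Nat.eqb_spec X k);
        subst; auto; lia.
Qed.
End Semantics.

Lemma free1_MProp Q x : ~ mso_free1 (MProp Q) x.
Proof. unfold MProp; destruct (excluded_middle_informative Q); simpl; lia. Qed.

Lemma free2_MProp Q X : ~ mso_free2 (MProp Q) X.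
Proof. unfold MProp; destruct (excluded_middle_informative Q); simpl; auto. Qed.

Lemma free1_MBigOr_map {T} (g : T -> mso L) l x :
  mso_free1 (MBigOr (map g l)) x -> exists a, In a l /\ mso_free1 (g a) x.
Proof.
  induction l; simpl; [intros; exfalso; lia|].
  intros [H|H]; [|destruct (IHl H) as (b & ? & ?)]; eauto.
Qed.

Lemma free2_MBigOr_map {T} (g : T -> mso L) l X :
  mso_free2 (MBigOr (map g l)) X -> exists a, In a l /\ mso_free2 (g a) X.
Proof.
  induction l; simpl; [tauto|].
  intros [H|H]; [|destruct (IHl H) as (b & ? & ?)]; eauto.
Qed.

Lemma free1_MBigAnd_map {T} (g : T -> mso L) l x :
  mso_free1 (MBigAnd (map g l)) x -> exists a, In a l /\ mso_free1 (g a) x.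
Proof.
  induction l; simpl; [intros; exfalso; lia|].
  intros [H|H]; [|destruct (IHl H) as (b & ? & ?)]; eauto.
Qed.

Lemma free2_MBigAnd_map {T} (g : T -> mso L) l X :
  mso_free2 (MBigAnd (map g l)) X -> exists a, In a l /\ mso_free2 (g a) X.
Proof.
  induction l; simpl; [tauto|].
  intros [H|H]; [|destruct (IHl H) as (b & ? & ?)]; eauto.
Qed.

Lemma free2_MEx2s k f X : mso_free2 (MEx2s k f) X -> k <= X /\ mso_free2 f X.
Proof.
  induction k; simpl; [auto with arith|].
  intros [? H]; apply IHk in H as [? ?]; split; [lia|auto].
Qed.

Lemma free1_MEx2s k f x : mso_free1 (MEx2s k f) x -> mso_free1 f x.
Proof. induction k; simpl; auto. Qed.

Lemma alpha_MProp n Q : mso_alpha_ok n (MProp Q).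
Proof. unfold MProp; destruct (excluded_middle_informative Q); simpl; auto. Qed.

Lemma alpha_MBigOr_map {T} n (g : T -> mso L) l :
  (forall a, In a l -> mso_alpha_ok n (g a)) -> mso_alpha_ok n (MBigOr (map g l)).
Proof. induction l; simpl; auto. Qed.

Lemma alpha_MBigAnd_map {T} n (g : T -> mso L) l :
  (forall a, In a l -> mso_alpha_ok n (g a)) -> mso_alpha_ok n (MBigAnd (map g l)).
Proof. induction l; simpl; auto. Qed.

Lemma alpha_MEx2s n k f : mso_alpha_ok n f -> mso_alpha_ok n (MEx2s k f).
Proof. induction k; simpl; auto. Qed.
End Connectives.

Arguments MTrue {L}.
Arguments MFalse {L}.
Arguments MProp {L} Q.

(** * From automata to formulas *)

Section AutomatonFormula.
Variables (L : rel_lang) (M : structure L) (n : nat) (A : automaton L n).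
Variable qs : list (state A).

Definition in_state j q := nth_error qs j = Some q.

Let js := seq 0 (length qs).

Definition MTrans (P : state A -> state A -> Prop) (x : nat) : mso L :=
  MBigOr (map (fun t => MAnd (MProp (P (fst (fst t)) (snd t))) (MAlpha (snd (fst t)) x))
    (trans A)).

Definition run_covers : mso L := MAll1 0 (MBigOr (map (MIn L 0) js)).

Definition run_starts : mso L :=
  MAll1 0 (MImp (MNot (MEx1 1 (MLt L 1 0)))
    (MBigAnd (map (fun j =>
       MImp (MIn L 0 j) (MTrans (fun q q' => initial A q /\ in_state j q') 0)) js))).

Definition run_steps : mso L :=
  MAll1 0 (MAll1 1 (MImp (MAnd (MLt L 0 1) (MNot (MEx1 2 (MAnd (MLt L 0 2) (MLt L 2 1)))))
    (MBigAnd (map (fun j => MBigAnd (map (fun j' =>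
       MImp (MAnd (MIn L 0 j) (MIn L 1 j'))
         (MTrans (fun q q' => in_state j q /\ in_state j' q') 1)) js)) js)))).

Definition run_ends : mso L :=
  MAll1 0 (MImp (MNot (MEx1 1 (MLt L 0 1)))
    (MBigAnd (map (fun j =>
       MImp (MIn L 0 j) (MProp (forall q, in_state j q -> final A q))) js))).

Definition MRun : mso L := MAnd run_covers (MAnd run_starts (MAnd run_steps run_ends)).

Definition MNonempty : mso L := MEx1 0 MTrue.

(* The initial state is read off no position, so the empty word is treated apart. *)
Definition MAccepts : mso L :=
  MOr (MAnd (MNot MNonempty) (MProp (exists q, initial A q /\ final A q)))
      (MAnd MNonempty (MEx2s (length qs) MRun)).

Section Run.
Variable w : list (list (dom M)).
Let m := conv_len w.

Definition step_at (P : state A -> state A -> Prop) i :=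
  exists q F q', In (q, F, q') (trans A) /\ P q q' /\ fo_sat M (conv_env w i) F.

(* [E j] is the set of positions [p] such that the run is in state [qs_j] after reading
   the letter at [p]. *)
Definition encodes_run (E : nat -> nat -> Prop) :=
  (forall p, p < m -> exists j, j < length qs /\ E j p) /\
  (forall j, j < length qs -> 0 < m -> E j 0 ->
     step_at (fun q q' => initial A q /\ in_state j q') 0) /\
  (forall j j' p, j < length qs -> j' < length qs -> S p < m -> E j p -> E j' (S p) ->
     step_at (fun q q' => in_state j q /\ in_state j' q') (S p)) /\
  (forall j, j < length qs -> 0 < m -> E j (m - 1) -> forall q, in_state j q -> final A q).

Lemma sat_MTrans e1 e2 P x : mso_sat M w e1 e2 (MTrans P x) <-> step_at P (e1 x).
Proof.
  unfold MTrans, step_at; rewrite sat_MBigOr_map; split.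
  - intros [[[q F] q'] [Ht [HP HF]]]; apply sat_MProp in HP; eauto 7.
  - intros (q & F & q' & Ht & HP & HF); exists (q, F, q'); simpl.
    split; [exact Ht|split; [apply sat_MProp|]; assumption].
Qed.

Lemma sat_MRun e1 E : mso_sat M w e1 E MRun <-> encodes_run E.
Proof.
  assert (Hjs : forall j, In j js <-> j < length qs) by (intro j; unfold js; rewrite in_seq; lia).
  unfold MRun, run_covers, run_starts, run_steps, run_ends, encodes_run.
  cbn [mso_sat]; rewrite !sat_MAll1.
  setoid_rewrite sat_MAll1; setoid_rewrite sat_MImp; setoid_rewrite sat_MBigOr_map;
  setoid_rewrite sat_MBigAnd_map; setoid_rewrite sat_MBigAnd_map;
  setoid_rewrite sat_MImp; setoid_rewrite sat_MTrans; setoid_rewrite sat_MProp.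
  cbn [mso_sat]; unfold upd; simpl; setoid_rewrite Hjs.
  fold m; split; intros (Hcov & Hstart & Hstep & Hend); (split; [|split; [|split]]).
  all: try (intros p Hp; destruct (Hcov p Hp) as (j & ? & ?); eauto; fail).
  - intros j Hj Hm HE; apply (Hstart 0 Hm); [intros [p' [_ ?]]; lia|assumption..].
  - intros j j' p Hj Hj' Hp HE HE'.
    apply (Hstep p ltac:(lia) (S p) Hp); [|assumption..|split; assumption].
    split; [lia|intros (r & _ & ?); lia].
  - intros j Hj Hm HE; apply (Hend (m - 1)); [lia|intros [p' [? ?]]; lia|assumption..].
  - intros p Hp Hfirst j Hj HE.
    assert (p = 0) as -> by (destruct p; [reflexivity|exfalso; apply Hfirst; exists 0; lia]).
    apply Hstart; assumption.
  - intros p Hp p' Hp' [Hlt Hnext] j Hj j' Hj' [HE HE'].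
    assert (p' = S p) as ->
      by (destruct (Nat.eq_dec p' (S p)); [assumption|exfalso; apply Hnext; exists (S p); lia]).
    apply Hstep; assumption.
  - intros p Hp Hlast j Hj HE.
    assert (p = m - 1) as ->
      by (destruct (Nat.eq_dec p (m - 1)); [assumption|exfalso; apply Hlast; exists (S p); lia]).
    apply Hend; [assumption|lia|assumption].
Qed.

Lemma in_state_functional j q q' : in_state j q -> in_state j q' -> q = q'.
Proof. unfold in_state; congruence. Qed.

Lemma accepts_of_encodes_run E : 0 < m -> encodes_run E -> accepts M A w.
Proof.
  intros Hm (Hcov & Hstart & Hstep & Hend).
  destruct (choice (fun p q => exists j, j < length qs /\ E j (Nat.min p (m - 1)) /\ in_state j q))
    as [st Hst].
  { intro p; destruct (Hcov (Nat.min p (m - 1)) ltac:(lia)) as [j [Hj HE]].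
    destruct (nth_error qs j) as [q|] eqn:Hq; [exists q, j; auto|].
    apply nth_error_None in Hq; lia. }
  assert (Hst' : forall p, p < m -> exists j, j < length qs /\ E j p /\ in_state j (st p)).
  { intros p Hp; destruct (Hst p) as [j Hj].
    replace (Nat.min p (m - 1)) with p in Hj by lia; eauto. }
  destruct (Hst' 0 Hm) as (j0 & Hj0 & HE0 & Hq0).
  destruct (Hstart _ Hj0 Hm HE0) as (q0 & F0 & q1 & Ht0 & [Hinit Hq1] & HF0).
  exists (fun i => match i with 0 => q0 | S p => st p end); split; [exact Hinit|split].
  - replace (conv_len w) with (S (m - 1)) by (unfold m; lia).
    destruct (Hst' (m - 1) ltac:(lia)) as (j & Hj & HE & Hq).
    exact (Hend _ Hj Hm HE _ Hq).
  - intros [|p] Hp.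
    + rewrite (in_state_functional Hq1 Hq0) in Ht0; eauto.
    + destruct (Hst' p ltac:(lia)) as (j & Hj & HE & Hq),
        (Hst' (S p) Hp) as (j' & Hj' & HE' & Hq').
      destruct (Hstep _ _ _ Hj Hj' Hp HE HE') as (q & F & q' & Ht & [Hq0' Hq1'] & HF).
      rewrite (in_state_functional Hq0' Hq), (in_state_functional Hq1' Hq') in Ht; eauto.
Qed.

Hypothesis qs_complete : forall q, In q qs.

Lemma encodes_run_of_accepts (run : nat -> state A) E :
  initial A (run 0) -> final A (run m) ->
  (forall i, i < m ->
     exists F, In (run i, F, run (S i)) (trans A) /\ fo_sat M (conv_env w i) F) ->
  (forall j p, j < length qs -> (E j p <-> p < m /\ in_state j (run (S p)))) ->
  encodes_run E.
Proof.
  intros Hinit Hfin Htrans HE; split; [|split; [|split]].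
  - intros p Hp; destruct (In_nth_error _ _ (qs_complete (run (S p)))) as [j Hj].
    assert (j < length qs) by (apply nth_error_Some; congruence).
    exists j; split; [assumption|apply HE; auto].
  - intros j Hj Hm HE0; apply HE in HE0 as [_ Hq1]; [|assumption].
    destruct (Htrans 0 Hm) as [F [Ht HF]]; exists (run 0), F, (run 1); auto.
  - intros j j' p Hj Hj' Hp HEp HEp'.
    apply HE in HEp as [_ Hq]; apply HE in HEp' as [_ Hq']; [|assumption..].
    destruct (Htrans (S p) Hp) as [F [Ht HF]]; exists (run (S p)), F, (run (S (S p))); auto.
  - intros j Hj Hm HEm q Hq; apply HE in HEm as [_ Hq']; [|assumption].
    replace m with (S (m - 1)) in Hfin by lia.
    rewrite (in_state_functional Hq Hq'); exact Hfin.
Qed.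

Lemma sat_MAccepts e1 e2 : mso_sat M w e1 e2 MAccepts <-> accepts M A w.
Proof.
  assert (Hne : forall e1 e2, mso_sat M w e1 e2 MNonempty <-> 0 < m).
  { intros; split; [intros [p [Hp _]]; unfold m; lia|].
    intro Hm; exists 0; split; [exact Hm|apply sat_MTrue]. }
  unfold MAccepts; rewrite sat_MOr; cbn [mso_sat]; rewrite !Hne, sat_MProp, sat_MEx2s.
  split.
  - intros [[Hm (q & Hi & Hf)]|[Hm (Q & _ & Hrun)]].
    + exists (fun _ => q); repeat split; auto; intros i Hi'; unfold m in Hm; lia.
    + apply sat_MRun in Hrun; exact (accepts_of_encodes_run Hm Hrun).
  - intros (run & Hinit & Hfin & Htrans).
    destruct (Nat.eq_dec m 0) as [Hm|Hm]; [left|right].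
    + split; [lia|exists (run 0); split; [exact Hinit|]].
      unfold m in Hm; rewrite Hm in Hfin; exact Hfin.
    + split; [lia|exists (fun j p => p < m /\ in_state j (run (S p)))].
      split; [intros X p _ [Hp _]; exact Hp|].
      apply sat_MRun, (encodes_run_of_accepts run); [assumption..|].
      intros j p Hj; destruct (Nat.ltb_spec j (length qs)); [reflexivity|lia].
Qed.
End Run.

Lemma MAccepts_sentence : mso_sentence MAccepts.
Proof.
  split; intros x Hx;
  repeat match goal with
  | H : mso_free1 (MProp _) _ |- _ => destruct (free1_MProp _ _ _ H)
  | H : mso_free2 (MProp _) _ |- _ => destruct (free2_MProp _ _ _ H)
  | H : mso_free1 (MBigOr (map _ _)) _ |- _ => apply free1_MBigOr_map in H as (? & ? & H)
  | H : mso_free2 (MBigOr (map _ _)) _ |- _ => apply free2_MBigOr_map in H as (? & ? & H)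
  | H : mso_free1 (MBigAnd (map _ _)) _ |- _ => apply free1_MBigAnd_map in H as (? & ? & H)
  | H : mso_free2 (MBigAnd (map _ _)) _ |- _ => apply free2_MBigAnd_map in H as (? & ? & H)
  | H : mso_free1 (MEx2s _ _) _ |- _ => apply free1_MEx2s in H
  | H : mso_free2 (MEx2s _ _) _ |- _ => apply free2_MEx2s in H as [? H]
  | H : In _ (seq _ _) |- _ => apply in_seq in H
  | H : _ /\ _ |- _ => destruct H
  | H : _ \/ _ |- _ => destruct H
  | H : mso_free1 _ _ |- _ => progress (unfold MAccepts, MNonempty, MRun, run_covers,
      run_starts, run_steps, run_ends, MTrans, js, MOr, MImp, MAll1, MTrue, MFalse in H;
      cbn [mso_free1 mso_free2] in H)
  | H : mso_free2 _ _ |- _ => progress (unfold MAccepts, MNonempty, MRun, run_covers,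
      run_starts, run_steps, run_ends, MTrans, js, MOr, MImp, MAll1, MTrue, MFalse in H;
      cbn [mso_free1 mso_free2] in H)
  end; (congruence || lia).
Qed.

Lemma MAccepts_alpha_ok : mso_alpha_ok n MAccepts.
Proof.
  assert (HT : forall P x, mso_alpha_ok n (MTrans P x)).
  { intros P x; apply alpha_MBigOr_map; intros [[q F] q'] Ht.
    split; [apply alpha_MProp|exact (trans_ok A _ _ _ Ht)]. }
  unfold MAccepts, MNonempty, MRun, run_covers, run_starts, run_steps, run_ends,
    MOr, MImp, MAll1, MTrue, MFalse.
  cbn [mso_alpha_ok]; repeat split; try apply alpha_MProp; apply alpha_MEx2s.
  cbn [mso_alpha_ok]; repeat split;
    repeat (apply alpha_MBigOr_map || apply alpha_MBigAnd_map; intros; cbn [mso_alpha_ok]);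
    repeat split; auto using alpha_MProp.
Qed.
End AutomatonFormula.

Theorem recognizable_mso_definable L (M : structure L) n R :
  recognizable M n R -> mso_definable M n R.
Proof.
  intros [A HA]; destruct (state_finite A) as [qs Hqs].
  exists (MAccepts A qs); split; [apply MAccepts_sentence|split; [apply MAccepts_alpha_ok|]].
  intros w Hw; rewrite (HA w Hw), sat_MAccepts; tauto.
Qed.

(** * Marked words and their regular languages *)

Fixpoint powerset {T} (l : list T) : list (list T) :=
  match l with [] => [[]] | a :: l => map (cons a) (powerset l) ++ powerset l end.

Lemma powerset_incl {T} {l s : list T} {x : T} : In s (powerset l) -> In x s -> In x l.
Proof.
  revert s; induction l as [|a l IH]; simpl; intros s Hs Hx.
  - destruct Hs as [<-|[]]; destruct Hx.
  - apply in_app_or in Hs as [Hs|Hs].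
    + apply in_map_iff in Hs as [s' [<- Hs']].
      destruct Hx as [<-|Hx]; [left; reflexivity|right; exact (IH s' Hs' Hx)].
    + right; exact (IH s Hs Hx).
Qed.

Lemma powerset_select {T} (Q : T -> Prop) (l : list T) :
  exists s, In s (powerset l) /\ forall x, In x s <-> In x l /\ Q x.
Proof.
  induction l as [|a l [s [Hs Hx]]]; simpl.
  - exists []; simpl; tauto.
  - destruct (classic (Q a)) as [Ha|Ha]; [exists (a :: s)|exists s];
      (split; [apply in_or_app; auto using in_map|]); intro x; simpl; rewrite Hx;
      split; intuition congruence.
Qed.

Fixpoint enum_lt (k : nat) : list {i | i < k} :=
  match k with
  | 0 => []
  | S k => exist _ k (Nat.lt_succ_diag_r k) ::
      map (fun q : {i | i < k} =>
             exist (fun i => i < S k) (proj1_sig q) (Nat.lt_lt_succ_r _ _ (proj2_sig q)))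
        (enum_lt k)
  end.

Lemma enum_lt_complete k (q : {i | i < k}) : In q (enum_lt k).
Proof.
  induction k as [|k IH]; destruct q as [i Hi]; [lia|simpl].
  destruct (Nat.eq_dec i k) as [->|Hik]; [left; f_equal; apply le_unique|right].
  assert (Hi' : i < k) by lia.
  apply in_map_iff; exists (exist (fun j => j < k) i Hi').
  split; [f_equal; apply le_unique|apply IH].
Qed.

Fixpoint all_vectors (k : nat) : list (list bool) :=
  match k with
  | 0 => [[]]
  | S k => map (cons true) (all_vectors k) ++ map (cons false) (all_vectors k)
  end.

Lemma all_vectors_complete v : In v (all_vectors (length v)).
Proof.
  induction v as [|b v IH]; simpl; [auto|].
  apply in_or_app; destruct b; [left|right]; apply in_map, IH.
Qed.

Lemma all_vectors_length k v : In v (all_vectors k) -> length v = k.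
Proof.
  revert v; induction k as [|k IH]; simpl; intros v Hv; [destruct Hv as [<-|[]]; reflexivity|].
  apply in_app_or in Hv as [Hv|Hv]; apply in_map_iff in Hv as [v' [<- Hv']]; simpl; auto.
Qed.

Section MarkedWords.
Variables (L : rel_lang) (M : structure L).

(* A position of a word <w> (its [lenv]) together with marks recording which first-order
   variables ([mark1]) and set variables ([mark2]) are interpreted at or contain it. *)
Record letter := mkLetter {
  lenv : nat -> option (dom M); mark1 : nat -> bool; mark2 : nat -> bool }.

Definition lang_eq (K K' : list letter -> Prop) := forall U, K U <-> K' U.

Definition residual (c : letter) (K : list letter -> Prop) : list letter -> Prop :=
  fun U => K (c :: U).

Inductive letter_prop := LFo (F : fo L) | LMark1 (x : nat) | LMark2 (X : nat).

Definition holds (a : letter_prop) (c : letter) : Prop :=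
  match a with
  | LFo F => fo_sat M (lenv c) F
  | LMark1 x => mark1 c x = true
  | LMark2 X => mark2 c X = true
  end.

Definition same_type (P : list letter_prop) (c c' : letter) :=
  forall a, In a P -> (holds a c <-> holds a c').

Definition residual_closed (P : list letter_prop) (Ks : list (list letter -> Prop)) :=
  (forall K, In K Ks -> forall c, exists K', In K' Ks /\ lang_eq (residual c K) K') /\
  (forall K, In K Ks -> forall c c', same_type P c c' ->
     lang_eq (residual c K) (residual c' K)).

Definition regular (P : list letter_prop) (K : list letter -> Prop) :=
  exists Ks, residual_closed P Ks /\ exists K', In K' Ks /\ lang_eq K K'.

Lemma regular_ext P K K' : lang_eq K K' -> regular P K -> regular P K'.
Proof.
  intros HK (Ks & HKs & K0 & HK0 & HK0'); exists Ks; split; [exact HKs|].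
  exists K0; split; [exact HK0|intro U; rewrite <- (HK U); apply HK0'].
Qed.

Lemma regular_of_residuals P K :
  (forall c, lang_eq (residual c K) K \/ lang_eq (residual c K) (fun _ => True) \/
             lang_eq (residual c K) (fun _ => False)) ->
  (forall c c', same_type P c c' -> lang_eq (residual c K) (residual c' K)) ->
  regular P K.
Proof.
  intros Hres Htype; exists [K; fun _ => True; fun _ => False].
  split; [split|exists K; split; [left; reflexivity|intro; tauto]].
  - intros K' [<-|[<-|[<-|[]]]] c.
    + destruct (Hres c) as [H|[H|H]]; eexists; (split; [|exact H]); simpl; auto.
    + exists (fun _ => True); simpl; split; [auto|intro; reflexivity].
    + exists (fun _ => False); simpl; split; [auto|intro; reflexivity].
  - intros K' [<-|[<-|[<-|[]]]] c c' Hc; auto; intro; reflexivity.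
Qed.

Lemma regular_not P K : regular P K -> regular P (fun U => ~ K U).
Proof.
  intros (Ks & [Hcl Htype] & K0 & HK0 & HK0').
  set (neg (K : list letter -> Prop) U := ~ K U).
  exists (map neg Ks); split; [split|].
  - intros K' HK' c; apply in_map_iff in HK' as [K1 [<- HK1]].
    destruct (Hcl K1 HK1 c) as [K2 [HK2 HK2']].
    exists (neg K2); split; [apply in_map; exact HK2|].
    intro U; unfold neg, residual; rewrite <- (HK2' U); reflexivity.
  - intros K' HK' c c' Hc U; apply in_map_iff in HK' as [K1 [<- HK1]].
    unfold neg, residual; rewrite (Htype K1 HK1 c c' Hc U); reflexivity.
  - exists (neg K0); split; [apply in_map; exact HK0|].
    intro U; unfold neg; rewrite (HK0' U); reflexivity.
Qed.

Lemma regular_and P1 P2 K1 K2 :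
  regular P1 K1 -> regular P2 K2 -> regular (P1 ++ P2) (fun U => K1 U /\ K2 U).
Proof.
  intros (Ks1 & [Hcl1 Htype1] & K01 & HK01 & HK01') (Ks2 & [Hcl2 Htype2] & K02 & HK02 & HK02').
  set (conj_lang (p : (list letter -> Prop) * (list letter -> Prop)) U := fst p U /\ snd p U).
  exists (map conj_lang (list_prod Ks1 Ks2)); split; [split|].
  - intros K' HK' c; apply in_map_iff in HK' as [[A1 A2] [<- HA]].
    apply in_prod_iff in HA as [HA1 HA2].
    destruct (Hcl1 A1 HA1 c) as [B1 [HB1 HB1']], (Hcl2 A2 HA2 c) as [B2 [HB2 HB2']].
    exists (conj_lang (B1, B2)); split; [apply in_map, in_prod; assumption|].
    intro U; unfold conj_lang; simpl; rewrite <- (HB1' U), <- (HB2' U); reflexivity.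
  - intros K' HK' c c' Hc U; apply in_map_iff in HK' as [[A1 A2] [<- HA]].
    apply in_prod_iff in HA as [HA1 HA2].
    assert (Hc1 : same_type P1 c c') by (intros a Ha; apply Hc, in_or_app; auto).
    assert (Hc2 : same_type P2 c c') by (intros a Ha; apply Hc, in_or_app; auto).
    unfold conj_lang; simpl.
    pose proof (Htype1 A1 HA1 c c' Hc1 U); pose proof (Htype2 A2 HA2 c c' Hc2 U).
    unfold residual in *; tauto.
  - exists (conj_lang (K01, K02)); split; [apply in_map, in_prod; assumption|].
    intro U; unfold conj_lang; simpl; rewrite (HK01' U), (HK02' U); reflexivity.
Qed.

Section Projection.
Variable set : bool -> letter -> letter.

Fixpoint relabel (bs : nat -> bool) (U : list letter) : list letter :=
  match U with [] => [] | c :: U => set (bs 0) c :: relabel (fun i => bs (S i)) U end.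

Lemma relabel_ext bs bs' U :
  (forall i, i < length U -> bs i = bs' i) -> relabel bs U = relabel bs' U.
Proof.
  revert bs bs'; induction U as [|c U IH]; intros bs bs' H; simpl; [reflexivity|].
  f_equal; [f_equal; apply H; simpl; lia|apply IH; intros i Hi; apply H; simpl; lia].
Qed.

Definition project (K : list letter -> Prop) : list letter -> Prop :=
  fun U => exists bs, K (relabel bs U).

Lemma project_cons K c U : project K (c :: U) <-> exists b, project (residual (set b c) K) U.
Proof.
  split.
  - intros [bs H]; exists (bs 0), (fun i => bs (S i)); exact H.
  - intros [b [bs H]]; exists (fun i => match i with 0 => b | S i => bs i end); exact H.
Qed.

(* The subset construction: the residuals of a union of projections are unions of
   projections of residuals. *)
Lemma regular_project P K :
  (forall b c c', same_type P c c' -> same_type P (set b c) (set b c')) ->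
  regular P K -> regular P (project K).
Proof.
  intros Hset (Ks & [Hcl Htype] & K0 & HK0 & HK0').
  set (union_proj (Ks' : list (list letter -> Prop)) U := exists K, In K Ks' /\ project K U).
  assert (Hcons : forall Ks' c U, union_proj Ks' (c :: U) <->
            exists K b, In K Ks' /\ project (residual (set b c) K) U).
  { intros; unfold union_proj; setoid_rewrite project_cons; firstorder. }
  exists (map union_proj (powerset Ks)); split; [split|].
  - intros K' HK' c; apply in_map_iff in HK' as [Ks' [<- HKs']].
    destruct (powerset_select (fun K2 => exists K1 b,
                 In K1 Ks' /\ lang_eq (residual (set b c) K1) K2) Ks) as [Ks'' [HKs'' Hsel]].
    exists (union_proj Ks''); split; [apply in_map; exact HKs''|].
    intro U; change (union_proj Ks' (c :: U) <-> union_proj Ks'' U); rewrite Hcons; split.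
    + intros (K1 & b & HK1 & [bs H]).
      destruct (Hcl K1 (powerset_incl HKs' HK1) (set b c)) as [K2 [HK2 HK2']].
      exists K2; split; [apply Hsel; eauto 6|exists bs; apply HK2', H].
    + intros (K2 & HK2 & [bs H]); apply Hsel in HK2 as (_ & K1 & b & HK1 & HK12).
      exists K1, b; split; [exact HK1|exists bs; apply HK12, H].
  - intros K' HK' c c' Hc U; apply in_map_iff in HK' as [Ks' [<- HKs']].
    change (union_proj Ks' (c :: U) <-> union_proj Ks' (c' :: U)); rewrite !Hcons.
    assert (Hb : forall K1 b, In K1 Ks' ->
              lang_eq (residual (set b c) K1) (residual (set b c') K1))
      by (intros K1 b HK1; exact (Htype K1 (powerset_incl HKs' HK1) _ _ (Hset b c c' Hc))).
    split; intros (K1 & b & HK1 & [bs H]); exists K1, b; split; auto; exists bs;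
      apply (Hb K1 b HK1); exact H.
  - destruct (powerset_select (fun K => K = K0) Ks) as [Ks0 [HKs0 Hsel]].
    exists (union_proj Ks0); split; [apply in_map; exact HKs0|].
    intro U; unfold union_proj, project; split.
    + intros [bs H]; exists K0; split; [apply Hsel; auto|exists bs; apply HK0', H].
    + intros (K1 & HK1 & [bs H]); apply Hsel in HK1 as [_ ->]; exists bs; apply HK0', H.
Qed.
End Projection.

Definition set_mark1 y b c :=
  mkLetter (lenv c) (fun z => if z =? y then b else mark1 c z) (mark2 c).
Definition set_mark2 X b c :=
  mkLetter (lenv c) (mark1 c) (fun Z => if Z =? X then b else mark2 c Z).

Lemma same_type_set_mark1 P y b c c' :
  same_type P c c' -> same_type P (set_mark1 y b c) (set_mark1 y b c').
Proof.
  intros Hc [F|x|X] Ha; simpl; try exact (Hc _ Ha).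
  destruct (x =? y); [reflexivity|exact (Hc _ Ha)].
Qed.

Lemma same_type_set_mark2 P X b c c' :
  same_type P c c' -> same_type P (set_mark2 X b c) (set_mark2 X b c').
Proof.
  intros Hc [F|x|Y] Ha; simpl; try exact (Hc _ Ha).
  destruct (Y =? X); [reflexivity|exact (Hc _ Ha)].
Qed.

Lemma mark1_same_type {P x c c'} :
  In (LMark1 x) P -> same_type P c c' -> mark1 c x = mark1 c' x.
Proof.
  intros Hx Hc; specialize (Hc _ Hx); simpl in Hc.
  destruct (mark1 c x), (mark1 c' x); intuition congruence.
Qed.

Definition count1 y (U : list letter) := length (filter (fun c => mark1 c y) U).

Lemma count1_cons y c U : count1 y (c :: U) = (if mark1 c y then 1 else 0) + count1 y U.
Proof. unfold count1; simpl; destruct (mark1 c y); reflexivity. Qed.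

Lemma count1_relabel_0 y bs U :
  count1 y (relabel (set_mark1 y) bs U) = 0 <-> forall i, i < length U -> bs i = false.
Proof.
  revert bs; induction U as [|c U IH]; intro bs; simpl relabel.
  - split; [simpl; lia|reflexivity].
  - rewrite count1_cons; simpl mark1; rewrite Nat.eqb_refl.
    destruct (bs 0) eqn:H0; simpl.
    + split; [discriminate|intro H; rewrite (H 0) in H0; [discriminate|simpl; lia]].
    + rewrite IH; split.
      * intros H [|i] Hi; [assumption|apply H; simpl in Hi; lia].
      * intros H i Hi; apply H; simpl; lia.
Qed.

Lemma count1_relabel_1 y bs U : count1 y (relabel (set_mark1 y) bs U) = 1 <->
  exists p, p < length U /\ forall i, i < length U -> bs i = (i =? p).
Proof.
  revert bs; induction U as [|c U IH]; intro bs; simpl relabel.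
  - split; [discriminate|intros [p [Hp _]]; simpl in Hp; lia].
  - rewrite count1_cons; simpl mark1; rewrite Nat.eqb_refl.
    destruct (bs 0) eqn:H0; simpl.
    + assert (E : S (count1 y (relabel (set_mark1 y) (fun i => bs (S i)) U)) = 1 <->
                  count1 y (relabel (set_mark1 y) (fun i => bs (S i)) U) = 0) by lia.
      rewrite E, count1_relabel_0; split.
      * intro H; exists 0; split; [lia|intros [|i] Hi; [exact H0|apply H; simpl in Hi; lia]].
      * intros [p [Hp H]] i Hi; rewrite (H (S i)) by (simpl; lia).
        specialize (H 0 ltac:(lia)); rewrite H0 in H; symmetry in H.
        apply Nat.eqb_eq in H as <-; reflexivity.
    + rewrite IH; split.
      * intros [p [Hp H]]; exists (S p); split; [simpl; lia|].
        intros [|i] Hi; [exact H0|apply H; simpl in Hi; lia].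
      * intros [[|p] [Hp H]]; [rewrite (H 0) in H0; [discriminate|simpl; lia]|].
        exists p; split; [simpl in Hp; lia|intros i Hi; apply (H (S i)); simpl; lia].
Qed.

Lemma regular_count1_eq1 y : regular [LMark1 y] (fun U => count1 y U = 1).
Proof.
  set (count_is_1_minus k U := count1 y U + k = 1).
  exists (map count_is_1_minus [0; 1; 2]); split; [split|].
  - intros K HK c; apply in_map_iff in HK as [k [<- Hk]].
    exists (count_is_1_minus (Nat.min 2 (k + if mark1 c y then 1 else 0))); split.
    + apply in_map; destruct Hk as [<-|[<-|[<-|[]]]]; destruct (mark1 c y); simpl; auto.
    + intro U; unfold residual, count_is_1_minus; rewrite count1_cons; destruct (mark1 c y); lia.
  - intros K HK c c' Hc U; apply in_map_iff in HK as [k [<- _]].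
    unfold residual, count_is_1_minus; rewrite !count1_cons.
    rewrite (mark1_same_type (in_eq _ _) Hc); reflexivity.
  - exists (count_is_1_minus 0); split; [left; reflexivity|intro U; unfold count_is_1_minus; lia].
Qed.

(* First-order quantification as projection onto a singleton set of positions. *)
Lemma regular_exists_position P y K : regular P K ->
  regular (LMark1 y :: P)
    (fun U => exists p, p < length U /\ K (relabel (set_mark1 y) (fun i => i =? p) U)).
Proof.
  intro HK.
  apply regular_ext with (project (set_mark1 y) (fun U => count1 y U = 1 /\ K U)).
  - intro U; unfold project; split.
    + intros [bs [H1 H2]]; apply count1_relabel_1 in H1 as [p [Hp Hbs]].
      exists p; split; [exact Hp|]; rewrite <- (relabel_ext _ _ _ _ Hbs); exact H2.
    + intros [p [Hp H]]; exists (fun i => i =? p); split; [apply count1_relabel_1; eauto|exact H].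
  - apply regular_project; [intros; apply same_type_set_mark1; assumption|].
    exact (regular_and (regular_count1_eq1 y) HK).
Qed.

Fixpoint marked_pos x (U : list letter) : nat :=
  match U with [] => 0 | c :: U => if mark1 c x then 0 else S (marked_pos x U) end.

Definition blank := mkLetter (fun _ => None) (fun _ => false) (fun _ => false).

(* Semantics of an MSO formula on a marked word: each free first-order variable denotes
   its first marked position, each free set variable the positions carrying its mark.
   An unmarked first-order variable denotes [length U], where [nth] reads [blank]. *)
Fixpoint msat (U : list letter) (phi : mso L) : Prop :=
  match phi with
  | MLt _ x y => marked_pos x U < marked_pos y U
  | MEq _ x y => marked_pos x U = marked_pos y U
  | MIn _ x X => mark2 (nth (marked_pos x U) U blank) X = true
  | MAlpha F x => fo_sat M (lenv (nth (marked_pos x U) U blank)) F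
  | MNot f => ~ msat U f
  | MAnd f g => msat U f /\ msat U g
  | MEx1 y f => exists p, p < length U /\ msat (relabel (set_mark1 y) (fun i => i =? p) U) f
  | MEx2 X f => exists bs, msat (relabel (set_mark2 X) bs U) f
  end.

Lemma regular_lt x y : regular [LMark1 x; LMark1 y] (fun U => marked_pos x U < marked_pos y U).
Proof.
  apply regular_of_residuals.
  - intro c; unfold residual; simpl.
    destruct (mark1 c x), (mark1 c y); [right; right|right; left|right; right|left];
      intro U; lia.
  - intros c c' Hc U; unfold residual; simpl.
    rewrite (mark1_same_type (in_eq _ _) Hc), (mark1_same_type (in_cons _ _ _ (in_eq _ _)) Hc).
    reflexivity.
Qed.

Lemma regular_eq x y : regular [LMark1 x; LMark1 y] (fun U => marked_pos x U = marked_pos y U).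
Proof.
  apply regular_of_residuals.
  - intro c; unfold residual; simpl.
    destruct (mark1 c x), (mark1 c y); [right; left|right; right|right; right|left];
      intro U; lia.
  - intros c c' Hc U; unfold residual; simpl.
    rewrite (mark1_same_type (in_eq _ _) Hc), (mark1_same_type (in_cons _ _ _ (in_eq _ _)) Hc).
    reflexivity.
Qed.

Lemma regular_in x X :
  regular [LMark1 x; LMark2 X] (fun U => mark2 (nth (marked_pos x U) U blank) X = true).
Proof.
  apply regular_of_residuals.
  - intro c; unfold residual; simpl; destruct (mark1 c x); [right|left; intro; reflexivity].
    destruct (mark2 c X); [left|right]; intro U; simpl; intuition discriminate.
  - intros c c' Hc U; unfold residual; simpl; rewrite (mark1_same_type (in_eq _ _) Hc).
    destruct (mark1 c' x); [exact (Hc (LMark2 X) ltac:(simpl; auto))|reflexivity].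
Qed.

Lemma regular_alpha F x :
  regular [LMark1 x; LFo F] (fun U => fo_sat M (lenv (nth (marked_pos x U) U blank)) F).
Proof.
  apply regular_of_residuals.
  - intro c; unfold residual; simpl; destruct (mark1 c x); [right|left; intro; reflexivity].
    destruct (classic (fo_sat M (lenv c) F)); [left|right]; intro U; simpl; tauto.
  - intros c c' Hc U; unfold residual; simpl; rewrite (mark1_same_type (in_eq _ _) Hc).
    destruct (mark1 c' x); [exact (Hc (LFo F) ltac:(simpl; auto))|reflexivity].
Qed.

Definition letter_prop_ok n (a : letter_prop) :=
  match a with LFo F => fo_formula_n n F | _ => True end.

Lemma regular_msat n phi : mso_alpha_ok n phi ->
  exists P, Forall (letter_prop_ok n) P /\ regular P (fun U => msat U phi).
Proof.
  induction phi as [x y|x y|x X|F x|f IH|f IHf g IHg|y f IH|X f IH]; simpl; intro Hok.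
  - exists [LMark1 x; LMark1 y]; split; [repeat constructor|apply regular_lt].
  - exists [LMark1 x; LMark1 y]; split; [repeat constructor|apply regular_eq].
  - exists [LMark1 x; LMark2 X]; split; [repeat constructor|apply regular_in].
  - exists [LMark1 x; LFo F]; split; [repeat constructor; exact Hok|apply regular_alpha].
  - destruct (IH Hok) as [P [HP HR]]; exists P; split; [exact HP|exact (regular_not HR)].
  - destruct Hok as [Hokf Hokg], (IHf Hokf) as [Pf [HPf HRf]], (IHg Hokg) as [Pg [HPg HRg]].
    exists (Pf ++ Pg); split; [apply Forall_app; split; assumption|exact (regular_and HRf HRg)].
  - destruct (IH Hok) as [P [HP HR]]; exists (LMark1 y :: P).
    split; [constructor; [exact I|exact HP]|exact (regular_exists_position y HR)].
  - destruct (IH Hok) as [P [HP HR]]; exists P; split; [exact HP|].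
    exact (regular_project (set_mark2 X) (fun b c c' => @same_type_set_mark2 P X b c c') HR).
Qed.

Definition bool_of_prop (Q : Prop) : bool := if excluded_middle_informative Q then true else false.

Lemma bool_of_prop_true Q : bool_of_prop Q = true <-> Q.
Proof. unfold bool_of_prop; destruct (excluded_middle_informative Q); intuition discriminate. Qed.

Lemma nth_relabel set bs U j : j < length U ->
  nth j (relabel set bs U) blank = set (bs j) (nth j U blank).
Proof.
  revert bs j; induction U as [|c U IH]; intros bs [|j] Hj; simpl in *; try lia; auto.
  exact (IH (fun i => bs (S i)) j ltac:(lia)).
Qed.

Lemma length_relabel set bs U : length (relabel set bs U) = length U.
Proof. revert bs; induction U; simpl; auto. Qed.

Lemma marked_pos_spec x U k : k < length U ->
  (forall i, i < length U -> mark1 (nth i U blank) x = (k =? i)) -> marked_pos x U = k.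
Proof.
  revert k; induction U as [|c U IH]; simpl; intros k Hk H; [lia|].
  rewrite (H 0) by lia; destruct k as [|k]; simpl; [reflexivity|].
  f_equal; apply IH; [lia|intros i Hi; apply (H (S i)); lia].
Qed.

Section Correspondence.
Variable w : list (list (dom M)).
Let m := conv_len w.

(* [U] is the word <w> marked according to the interpretation [e1], [e2] of the free
   variables of [phi]. *)
Definition represents (e1 : nat -> nat) (e2 : nat -> nat -> Prop) (phi : mso L) U :=
  length U = m /\ (forall x, mso_free1 phi x -> e1 x < m) /\
  forall i, i < m ->
    lenv (nth i U blank) = conv_env w i /\
    (forall x, mso_free1 phi x -> mark1 (nth i U blank) x = (e1 x =? i)) /\
    (forall X, mso_free2 phi X -> (mark2 (nth i U blank) X = true <-> e2 X i)).

Lemma represents_mono e1 e2 phi psi U :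
  (forall x, mso_free1 phi x -> mso_free1 psi x) ->
  (forall X, mso_free2 phi X -> mso_free2 psi X) ->
  represents e1 e2 psi U -> represents e1 e2 phi U.
Proof.
  intros H1 H2 (Hl & Hbd & HU); split; [exact Hl|split; [auto|]].
  intros i Hi; destruct (HU i Hi) as (? & ? & ?); auto.
Qed.

Lemma represents_marked_pos e1 e2 phi U x :
  represents e1 e2 phi U -> mso_free1 phi x -> marked_pos x U = e1 x.
Proof.
  intros (Hl & Hbd & HU) Hx; apply marked_pos_spec; rewrite Hl; [exact (Hbd x Hx)|].
  intros i Hi; apply (HU i Hi), Hx.
Qed.

Lemma represents_ex1 e1 e2 y f U p : p < m -> represents e1 e2 (MEx1 y f) U ->
  represents (upd e1 y p) e2 f (relabel (set_mark1 y) (fun i => i =? p) U).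
Proof.
  intros Hp (Hl & Hbd & HU); split; [rewrite length_relabel; exact Hl|split].
  - intros z Hz; unfold upd; destruct (Nat.eqb_spec z y); [exact Hp|apply Hbd; simpl; auto].
  - intros i Hi; rewrite nth_relabel by lia; destruct (HU i Hi) as (Henv & H1 & H2).
    split; [exact Henv|split].
    + intros z Hz; unfold upd, set_mark1; simpl; destruct (Nat.eqb_spec z y) as [->|Hzy].
      * apply Nat.eqb_sym.
      * apply H1; simpl; auto.
    + intros Z HZ; apply H2, HZ.
Qed.

Lemma represents_ex2 e1 e2 X f U bs (P : nat -> Prop) :
  (forall i, i < m -> (bs i = true <-> P i)) -> represents e1 e2 (MEx2 X f) U ->
  represents e1 (upd e2 X P) f (relabel (set_mark2 X) bs U).
Proof.
  intros Hbs (Hl & Hbd & HU); split; [rewrite length_relabel; exact Hl|split; [exact Hbd|]].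
  intros i Hi; rewrite nth_relabel by lia; destruct (HU i Hi) as (Henv & H1 & H2).
  split; [exact Henv|split].
  - intros z Hz; apply H1, Hz.
  - intros Z HZ; unfold upd, set_mark2; simpl; destruct (Nat.eqb_spec Z X) as [->|HZX].
    + apply Hbs, Hi.
    + apply H2; simpl; auto.
Qed.

Lemma mso_sat_iff_msat phi : forall U e1 e2,
  represents e1 e2 phi U -> (mso_sat M w e1 e2 phi <-> msat U phi).
Proof.
  induction phi as [x y|x y|x X|F x|f IH|f IHf g IHg|y f IH|X f IH]; intros U e1 e2 HU;
    simpl.
  - rewrite (represents_marked_pos x HU (or_introl eq_refl)),
      (represents_marked_pos y HU (or_intror eq_refl)); reflexivity.
  - rewrite (represents_marked_pos x HU (or_introl eq_refl)),
      (represents_marked_pos y HU (or_intror eq_refl)); reflexivity.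
  - rewrite (represents_marked_pos x HU eq_refl).
    destruct HU as (_ & Hbd & HU); symmetry; apply (HU _ (Hbd x eq_refl)); reflexivity.
  - rewrite (represents_marked_pos x HU eq_refl).
    destruct HU as (_ & Hbd & HU); rewrite (proj1 (HU _ (Hbd x eq_refl))); reflexivity.
  - rewrite (IH U e1 e2); [reflexivity|exact HU].
  - rewrite (IHf U e1 e2), (IHg U e1 e2);
      [reflexivity|revert HU; apply represents_mono; simpl; auto..].
  - assert (Hl : length U = m) by apply HU.
    rewrite Hl; split; intros [p [Hp H]]; exists p; split; auto;
      revert H; apply IH, represents_ex1; assumption.
  - split.
    + intros [P [HP H]]; exists (fun i => bool_of_prop (P i)); revert H; apply IH.
      apply represents_ex2; [intros; apply bool_of_prop_true|exact HU].
    + intros [bs H]; exists (fun i => bs i = true /\ i < m); split; [tauto|].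
      revert H; apply IH, represents_ex2; [tauto|exact HU].
Qed.
End Correspondence.

Definition unmarked (env : nat -> option (dom M)) :=
  mkLetter env (fun _ => false) (fun _ => false).

Definition unmarked_word (w : list (list (dom M))) : list letter :=
  map (fun i => unmarked (conv_env w i)) (seq 0 (conv_len w)).

Lemma length_unmarked_word w : length (unmarked_word w) = conv_len w.
Proof. unfold unmarked_word; rewrite length_map, length_seq; reflexivity. Qed.

Lemma nth_unmarked_word w i : i < conv_len w ->
  nth i (unmarked_word w) blank = unmarked (conv_env w i).
Proof.
  intro Hi; unfold unmarked_word.
  rewrite (nth_indep _ blank ((fun i => unmarked (conv_env w i)) 0))
    by (rewrite length_map, length_seq; exact Hi).
  rewrite (map_nth (fun i => unmarked (conv_env w i))), seq_nth by exact Hi; reflexivity.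
Qed.

Lemma represents_unmarked_word w e1 e2 phi :
  mso_sentence phi -> represents w e1 e2 phi (unmarked_word w).
Proof.
  intros [H1 H2]; split; [apply length_unmarked_word|split; [intros x Hx; destruct (H1 x Hx)|]].
  intros i Hi; rewrite nth_unmarked_word by exact Hi.
  split; [reflexivity|split; [intros x Hx; destruct (H1 x Hx)|intros X HX; destruct (H2 X HX)]].
Qed.

Lemma lang_along_word (Ks : nat -> list letter -> Prop) U :
  (forall i, i < length U -> lang_eq (residual (nth i U blank) (Ks i)) (Ks (S i))) ->
  Ks (length U) [] <-> Ks 0 U.
Proof.
  revert Ks; induction U as [|c U IH]; intros Ks HKs; simpl; [reflexivity|].
  rewrite (IH (fun i => Ks (S i))); [symmetry; apply (HKs 0); simpl; lia|].
  intros i Hi; apply (HKs (S i)); simpl; lia.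
Qed.

(** * From regular languages to automata *)

Section ResidualAutomaton.
Variables (n : nat) (P : list letter_prop) (Ks : list (list letter -> Prop)).
Hypotheses (HP : Forall (letter_prop_ok n) P) (HKs : residual_closed P Ks).

Definition FTrue : fo L := FEx 0 (FEq L 0 0).

(* Unmarked letters carry no marks, so mark properties are described by a false formula. *)
Definition fo_of_prop (a : letter_prop) : fo L :=
  match a with LFo F => F | _ => FNot FTrue end.

Definition type_vector (c : letter) : list bool := map (fun a => bool_of_prop (holds a c)) P.

Fixpoint type_formula (Q : list letter_prop) (v : list bool) : fo L :=
  match Q, v with
  | a :: Q, b :: v =>
      FAnd (if b then fo_of_prop a else FNot (fo_of_prop a)) (type_formula Q v)
  | _, _ => FTrue
  end.

Lemma fo_sat_fo_of_prop env a : fo_sat M env (fo_of_prop a) <-> holds a (unmarked env).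
Proof.
  assert (Htrue : fo_sat M env FTrue) by (exists None; reflexivity).
  destruct a; simpl; [reflexivity|..]; intuition discriminate.
Qed.

Lemma fo_sat_type_formula env : forall Q v, length v = length Q ->
  (fo_sat M env (type_formula Q v) <->
   map (fun a => bool_of_prop (holds a (unmarked env))) Q = v).
Proof.
  induction Q as [|a Q IH]; intros [|b v] Hv; simpl in Hv |- *; try discriminate.
  - split; [reflexivity|exists None; reflexivity].
  - rewrite IH by lia; pose proof (bool_of_prop_true (holds a (unmarked env))) as Hb.
    destruct (bool_of_prop (holds a (unmarked env))), b; simpl; rewrite ?fo_sat_fo_of_prop;
      intuition congruence.
Qed.

Lemma same_type_of_type_vector c c' : type_vector c = type_vector c' -> same_type P c c'.
Proof.
  intros H a Ha; apply (ext_in_map H) in Ha.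
  rewrite <- (bool_of_prop_true (holds a c)), <- (bool_of_prop_true (holds a c')), Ha.
  reflexivity.
Qed.

Lemma type_formula_ok : forall Q v,
  Forall (letter_prop_ok n) Q -> fo_formula_n n (type_formula Q v).
Proof.
  assert (Htrue : forall x, ~ fo_free FTrue x) by (simpl; lia).
  assert (Hprop : forall a x, letter_prop_ok n a -> fo_free (fo_of_prop a) x -> x < n)
    by (intros [F|y|Y] x Ha Hx; [exact (Ha x Hx)|destruct (Htrue x Hx)..]).
  induction Q as [|a Q IH]; intros [|b v] HQ x Hx; try destruct (Htrue x Hx).
  inversion_clear HQ as [|? ? Ha HQ']; destruct Hx as [Hx|Hx]; [|exact (IH v HQ' x Hx)].
  destruct b; exact (Hprop a x Ha Hx).
Qed.

Definition rstate := {i | i < length Ks}.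

Definition lang_of (q : rstate) := nth (proj1_sig q) Ks (fun _ => False).

Lemma next_state_exists q v : exists q' : rstate,
  forall c, type_vector c = v -> lang_eq (residual c (lang_of q)) (lang_of q').
Proof.
  destruct HKs as [Hcl Htype].
  destruct (classic (exists c, type_vector c = v)) as [[c0 Hc0]|Hv];
    [|exists q; intros c Hc; destruct Hv; eauto].
  destruct (Hcl _ (nth_In _ (fun _ => False) (proj2_sig q)) c0) as [K' [HK' HK'c0]].
  apply In_nth with (d := fun _ => False) in HK' as [j [Hj <-]].
  exists (exist _ j Hj); intros c Hc U; rewrite <- (HK'c0 U).
  apply (Htype _ (nth_In _ (fun _ => False) (proj2_sig q))), same_type_of_type_vector; congruence.
Qed.

Definition next_state q v : rstate :=
  proj1_sig (constructive_indefinite_description _ (next_state_exists q v)).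

Lemma residual_next_state q c :
  lang_eq (residual c (lang_of q)) (lang_of (next_state q (type_vector c))).
Proof.
  exact (proj2_sig (constructive_indefinite_description _ (next_state_exists q _)) c eq_refl).
Qed.

Definition rtrans : list (rstate * fo L * rstate) :=
  flat_map (fun q => map (fun v => (q, type_formula P v, next_state q v))
                         (all_vectors (length P)))
    (enum_lt (length Ks)).

Lemma rtrans_ok q F q' : In (q, F, q') rtrans -> fo_formula_n n F.
Proof.
  intro Ht; apply in_flat_map in Ht as [q0 [_ Ht]]; apply in_map_iff in Ht as [v [Hv _]].
  injection Hv as _ <- _; apply type_formula_ok, HP.
Qed.

Lemma rtrans_residual q F q' env : In (q, F, q') rtrans -> fo_sat M env F ->
  lang_eq (residual (unmarked env) (lang_of q)) (lang_of q').
Proof.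
  intros Ht HF; apply in_flat_map in Ht as [q0 [_ Ht]].
  apply in_map_iff in Ht as [v [Hv Hvin]]; injection Hv as -> <- <-.
  apply fo_sat_type_formula in HF; [|exact (all_vectors_length _ _ Hvin)].
  unfold type_vector; rewrite <- HF; apply residual_next_state.
Qed.

Lemma rtrans_complete q env :
  In (q, type_formula P (type_vector (unmarked env)), next_state q (type_vector (unmarked env)))
    rtrans /\ fo_sat M env (type_formula P (type_vector (unmarked env))).
Proof.
  split; [|apply fo_sat_type_formula; [unfold type_vector; apply length_map|reflexivity]].
  apply in_flat_map; exists q; split; [apply enum_lt_complete|].
  apply in_map_iff; exists (type_vector (unmarked env)); split; [reflexivity|].
  unfold type_vector; rewrite <- (length_map (fun a => bool_of_prop (holds a (unmarked env))) P).
  apply all_vectors_complete.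
Qed.

Definition residual_automaton (K : list letter -> Prop) : automaton L n := {|
  state := rstate;
  state_finite := ex_intro _ (enum_lt (length Ks)) (@enum_lt_complete _);
  initial q := lang_eq (lang_of q) K;
  final q := lang_of q [];
  trans := rtrans;
  trans_ok := rtrans_ok |}.

Lemma accepts_residual_automaton K w :
  In K Ks -> (accepts M (residual_automaton K) w <-> K (unmarked_word w)).
Proof.
  intro HK; unfold accepts; simpl.
  assert (Hlen := length_unmarked_word w).
  assert (Halong : forall run : nat -> rstate,
    (forall i, i < conv_len w -> lang_eq (residual (unmarked (conv_env w i)) (lang_of (run i)))
                                         (lang_of (run (S i)))) ->
    lang_of (run (conv_len w)) [] <-> lang_of (run 0) (unmarked_word w)).
  { intros run Hrun; rewrite <- Hlen; apply (lang_along_word (fun i => lang_of (run i))).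
    intros i Hi; rewrite nth_unmarked_word by lia; apply Hrun; lia. }
  split.
  - intros (run & Hinit & Hfin & Htrans); apply Hinit, Halong; [|exact Hfin].
    intros i Hi; destruct (Htrans i Hi) as [F [Ht HF]]; exact (rtrans_residual _ _ _ _ Ht HF).
  - intro HKw; apply In_nth with (d := fun _ => False) in HK as [i0 [Hi0 HK]].
    set (run := fix run i := match i with
                | 0 => exist _ i0 Hi0
                | S i => next_state (run i) (type_vector (unmarked (conv_env w i)))
                end).
    assert (Hrun0 : lang_eq (lang_of (run 0)) K)
      by (intro U; unfold lang_of; simpl; rewrite HK; reflexivity).
    exists run; split; [exact Hrun0|split].
    + apply Halong; [intros i _; apply residual_next_state|apply Hrun0, HKw].
    + intros i _; eexists; apply rtrans_complete.
Qed.
End ResidualAutomaton.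
End MarkedWords.

Theorem mso_definable_recognizable L (M : structure L) n R :
  mso_definable M n R -> recognizable M n R.
Proof.
  intros (psi & Hpsi & Hok & HR).
  destruct (regular_msat M _ _ Hok) as (P & HP & Ks & HKs & K & HK & HpsiK).
  exists (residual_automaton HP HKs K); intros w Hw.
  rewrite (HR w Hw), (accepts_residual_automaton HP HKs K w HK).
  rewrite <- (HpsiK (unmarked_word M w)).
  apply mso_sat_iff_msat, represents_unmarked_word, Hpsi.
Qed.

Theorem proposition3p4 (L : rel_lang) (M : structure L) (n : nat)
    (R : list (list (dom M)) -> Prop) :
  1 <= n -> (mso_definable M n R <-> recognizable M n R).
Proof.
  intros _; split; [apply mso_definable_recognizable|apply recognizable_mso_definable].
Qed.
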